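(* For $a\le b$ and $\varepsilon,\delta>0$ let $T^{\varepsilon,\delta}_{a,b}:\mathbb{R}\to\mathbb{R}$ be the function equal to $0$ for $w\le a-\varepsilon$; $\frac{2}{\varepsilon^2}(w-(a-\varepsilon))^2$ on $(a-\varepsilon,a-\frac\varepsilon2]$; $1-\frac{2}{\varepsilon^2}(w-a)^2$ on $(a-\frac\varepsilon2,a]$; $1$ on $(a,b)$; $1-\frac2{\delta^2}(w-b)^2$ on $[b,b+\frac\delta2)$; $\frac{2}{\delta^2}(w-(b+\delta))^2$ on $[b+\frac\delta2,b+\delta)$; $0$ for $w\ge b+\delta$. There exists a constant $C$ such that \[\kappa_2(T^{\varepsilon,\delta}_{a,b})=\sup_{\phi,w}\big|(T^{\varepsilon,\delta}_{a,b})_\phi(w)\big|(1+|w|)^2\le C(\varepsilon^{-1}+\delta^{-1})\] for all $\varepsilon,\delta\in(0,1]$ and $0\le a\le b\le1$.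
   Context: $e(x)=e^{2\pi ix}$. For $f:\mathbb{R}\to\mathbb{R}$ and $\phi\in\mathbb{R}$: $f_\phi=f$ if $\phi\equiv0\bmod2\pi$; $f_\phi(w)=e(-1/4)f(-w)$ if $\phi\equiv\pi\bmod2\pi$; otherwise $f_\phi(w)=e(-\sigma_\phi/8)|\sin\phi|^{-1/2}\int_\mathbb{R}e\big(\frac{\frac12(w^2+w'^2)\cos\phi-ww'}{\sin\phi}\big)f(w')dw'$ with $\sigma_\phi=2\nu+1$ for $\nu\pi<\phi<(\nu+1)\pi$. *)

From Stdlib Require Import Reals.
From Coquelicot Require Import Coquelicot.
Open Scope R_scope.

(* e(x) = exp(2 pi i x) *)
Definition ee (x : R) : C := (cos (2 * PI * x), sin (2 * PI * x)).

Definition CInt_R (g : R -> C) : C :=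
  (RInt_gen (fun t => fst (g t)) (Rbar_locally m_infty) (Rbar_locally p_infty),
   RInt_gen (fun t => snd (g t)) (Rbar_locally m_infty) (Rbar_locally p_infty)).

(* sigma_phi = 2 nu + 1 where nu pi < phi < (nu+1) pi, i.e. nu = floor(phi/pi) *)
Definition sigma_phi (phi : R) : R := 2 * IZR (Int_part (phi / PI)) + 1.

Definition frft (f : R -> R) (phi : R) (w : R) : C :=
  let k := Int_part (phi / PI) in
  if Req_EM_T (phi / PI) (IZR k) then
    (if Z.even k then RtoC (f w)               (* phi = 0 mod 2 pi *)
     else Cmult (ee (-(1/4))) (RtoC (f (- w)))) (* phi = pi mod 2 pi *)
  else
    Cmult (Cmult (ee (- sigma_phi phi / 8)) (RtoC (/ sqrt (Rabs (sin phi)))))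
      (CInt_R (fun w' =>
         Cmult (ee (((1/2) * (w ^ 2 + w' ^ 2) * cos phi - w * w') / sin phi))
               (RtoC (f w')))).

Definition Tfun (eps delta a b : R) (w : R) : R :=
  if Rle_dec w (a - eps) then 0
  else if Rle_dec w (a - eps / 2) then 2 / eps ^ 2 * (w - (a - eps)) ^ 2
  else if Rle_dec w a then 1 - 2 / eps ^ 2 * (w - a) ^ 2
  else if Rlt_dec w b then 1
  else if Rlt_dec w (b + delta / 2) then 1 - 2 / delta ^ 2 * (w - b) ^ 2
  else if Rlt_dec w (b + delta) then 2 / delta ^ 2 * (w - (b + delta)) ^ 2
  else 0.

From Stdlib Require Import Reals Lra Psatz.
From Coquelicot Require Import Coquelicot.
Open Scope R_scope.

(* On the five intervals where [Tfun] is a quadratic polynomial [q], the kernel integral is a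
   sum of integrals of [cos (k2 u^2 + k1 u + k0) * q u].  For large [|w|] the phase has
   derivative of size [|w| / |sin phi|] on the support, and two integrations by parts
   give a bound of order [(1/eps + 1/delta) sin^2 phi / w^2]; the boundary terms
   telescope because [Tfun] is continuous and vanishes at both ends.  For bounded [w] and
   [|cos phi| <= 1/2] the trivial bound suffices, since [|sin phi|] is then bounded below.
   For bounded [w] and [|cos phi| > 1/2] one integration by parts against a primitive of
   the chirp, which is a Fresnel integral bounded by [4 / sqrt (|cos phi / sin phi|)],
   compensates the factor [|sin phi|^(-1/2)]. *)

(** * Piecewise quadratic amplitudes *)

Definition quad (c0 c2 z u : R) : R := c0 + c2 * (u - z) ^ 2.

Lemma quad_derive c0 c2 z x : is_derive (quad c0 c2 z) x (2 * c2 * (x - z)).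
Proof. unfold quad. auto_derive; [easy | ring]. Qed.

Lemma quad_continuous c0 c2 z x : continuous (quad c0 c2 z) x.
Proof. apply (ex_derive_continuous (V := R_NormedModule)). eexists. apply quad_derive. Qed.

Record piece := Piece { lo : R; hi : R; coef0 : R; coef2 : R; center : R }.

Definition pquad (P : piece) : R -> R := quad (coef0 P) (coef2 P) (center P).

Definition pslope (P : piece) : R := (hi P - lo P) * Rabs (2 * coef2 P).

Definition piece_ok (P : piece) : Prop :=
  lo P <= center P <= hi P /\ hi P - lo P <= 1 /\
  forall u, lo P <= u <= hi P -> Rabs (pquad P u) <= 1.

Definition chained (P : nat -> piece) (n : nat) : Prop :=
  forall i, (i < n)%nat -> hi (P i) = lo (P (S i)).

Definition Ipiece (f : R -> R) (P : piece) : R :=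
  RInt (fun u => f u * pquad P u) (lo P) (hi P).

Definition Ipieces (f : R -> R) (P : nat -> piece) (n : nat) : R :=
  sum_f_R0 (fun i => Ipiece f (P i)) n.

Lemma piece_ok_lo_le_hi P : piece_ok P -> lo P <= hi P.
Proof. intros [Hc _]. lra. Qed.

Lemma pslope_ge0 P : piece_ok P -> 0 <= pslope P.
Proof.
  intros [Hc _]. apply Rmult_le_pos; [lra | apply Rabs_pos].
Qed.

Lemma pquad_slope_le P u : piece_ok P -> lo P <= u <= hi P ->
  Rabs (2 * coef2 P * (u - center P)) <= pslope P.
Proof.
  intros [Hc _] Hu. unfold pslope. rewrite Rabs_mult, Rmult_comm.
  apply Rmult_le_compat_r; [apply Rabs_pos|]. apply Rabs_le. lra.
Qed.

Lemma is_RInt_Ipiece (f g : R -> R) P : lo P <= hi P -> (forall u, continuous f u) ->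
  (forall u, lo P <= u <= hi P -> g u = f u * pquad P u) ->
  is_RInt g (lo P) (hi P) (Ipiece f P).
Proof.
  intros Hlh Hf Hg.
  apply is_RInt_ext with (fun u => f u * pquad P u).
  { intros x Hx. rewrite Rmin_left, Rmax_right in Hx by lra. rewrite Hg; [easy | lra]. }
  apply (RInt_correct (V := R_CompleteNormedModule)).
  apply (ex_RInt_continuous (V := R_CompleteNormedModule)). intros x _.
  apply (continuous_mult f (pquad P)); [apply Hf | apply quad_continuous].
Qed.

Lemma is_RInt_Ipieces (f g : R -> R) (P : nat -> piece) n :
  chained P n -> (forall u, continuous f u) ->
  (forall i, (i <= n)%nat -> lo (P i) <= hi (P i)) ->
  (forall i u, (i <= n)%nat -> lo (P i) <= u <= hi (P i) -> g u = f u * pquad (P i) u) ->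
  is_RInt g (lo (P O)) (hi (P n)) (Ipieces f P n).
Proof.
  intros Hch Hf Hlh Hg. induction n as [|n IH].
  - apply is_RInt_Ipiece; auto.
  - apply (is_RInt_Chasles g _ (hi (P n))).
    + apply IH; auto. intros i Hi. apply Hch. lia.
    + rewrite (Hch n) by lia. apply is_RInt_Ipiece; auto.
Qed.

Lemma is_RInt_zero (g : R -> R) p q : p <= q -> (forall u, p < u < q -> g u = 0) ->
  is_RInt g p q 0.
Proof.
  intros Hpq Hg.
  apply is_RInt_ext with (fun _ => 0).
  { intros x Hx. rewrite Rmin_left, Rmax_right in Hx by lra. rewrite Hg; [easy | lra]. }
  assert (H := is_RInt_const (V := R_NormedModule) p q 0).
  change (scal (q - p) 0) with ((q - p) * 0) in H. rewrite Rmult_0_r in H. exact H.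
Qed.

Lemma is_RInt_gen_Ipieces (f g : R -> R) (P : nat -> piece) n :
  chained P n -> (forall u, continuous f u) ->
  (forall i, (i <= n)%nat -> lo (P i) <= hi (P i)) ->
  (forall i u, (i <= n)%nat -> lo (P i) <= u <= hi (P i) -> g u = f u * pquad (P i) u) ->
  (forall u, u <= lo (P O) \/ hi (P n) <= u -> g u = 0) ->
  is_RInt_gen g (Rbar_locally m_infty) (Rbar_locally p_infty) (Ipieces f P n).
Proof.
  intros Hch Hf Hlh Hg Hout Q HQ.
  apply Filter_prod with (fun L => L < lo (P O)) (fun R => hi (P n) < R).
  - exists (lo (P O)). easy.
  - exists (hi (P n)). easy.
  - intros L R HL HR. exists (Ipieces f P n). split; [simpl | now apply locally_singleton].
    replace (Ipieces f P n) with (plus (plus 0 (Ipieces f P n)) 0)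
      by (unfold plus; simpl; ring).
    apply (is_RInt_Chasles g _ (hi (P n))); [apply (is_RInt_Chasles g _ (lo (P O)))|].
    + apply is_RInt_zero; [lra|]. intros u Hu. apply Hout. left; lra.
    + now apply is_RInt_Ipieces.
    + apply is_RInt_zero; [lra|]. intros u Hu. apply Hout. right; lra.
Qed.

Lemma Ipieces_abs_le (f : R -> R) (P : nat -> piece) (h : nat -> R) n :
  (forall i, (i <= n)%nat -> Rabs (Ipiece f (P i)) <= h i) ->
  Rabs (Ipieces f P n) <= sum_f_R0 h n.
Proof.
  intros Hh. eapply Rle_trans; [apply sum_f_R0_triangle | now apply sum_Rle].
Qed.

Lemma sum_chained_telescope (F : R -> R) (P : nat -> piece) n : chained P n ->
  sum_f_R0 (fun i => F (hi (P i)) - F (lo (P i))) n = F (hi (P n)) - F (lo (P O)).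
Proof.
  intros Hch. induction n as [|n IH]; [easy|].
  simpl. rewrite IH by (intros i Hi; apply Hch; lia). rewrite (Hch n) by lia. ring.
Qed.

Lemma Ipieces_telescope_bound (f F : R -> R) (P : nat -> piece) (h : nat -> R) n :
  chained P n ->
  (forall i, (i <= n)%nat -> Rabs (Ipiece f (P i) - (F (hi (P i)) - F (lo (P i)))) <= h i) ->
  Rabs (Ipieces f P n - (F (hi (P n)) - F (lo (P O)))) <= sum_f_R0 h n.
Proof.
  intros Hch Hh. unfold Ipieces.
  rewrite <- (sum_chained_telescope F P n Hch), <- minus_sum.
  eapply Rle_trans; [apply sum_f_R0_triangle | now apply sum_Rle].
Qed.

(** * Oscillatory integrals over a piece *)

Lemma corr_abs_le x k2 q q1 D mu : Rabs x <= mu -> Rabs k2 * mu <= 1 / 4 ->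
  Rabs q <= 1 -> Rabs q1 <= D -> Rabs (q1 * x ^ 2 - 2 * k2 * q * x ^ 3) <= (D + 1 / 2) * mu ^ 2.
Proof.
  intros Hx Hk Hq Hq1.
  assert (HX := Rabs_pos x). assert (HK := Rabs_pos k2). assert (HQ := Rabs_pos q).
  assert (HQ1 := Rabs_pos q1).
  eapply Rle_trans; [apply Rabs_triang|]. rewrite Rabs_Ropp, !Rabs_mult, <- !RPow_abs.
  rewrite (Rabs_right 2) by lra.
  assert (Rabs x ^ 2 <= mu ^ 2) by (apply pow_incr; lra).
  assert (Rabs x ^ 3 <= mu ^ 3) by (apply pow_incr; lra).
  assert (0 <= Rabs x ^ 2) by (apply pow_le; lra).
  assert (Rabs q1 * Rabs x ^ 2 <= D * mu ^ 2) by (apply Rmult_le_compat; lra).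
  assert (Rabs q * Rabs x ^ 3 <= mu ^ 3) by (rewrite <- (Rmult_1_l (mu ^ 3)); apply Rmult_le_compat; try apply pow_le; lra).
  assert (Rabs k2 * (Rabs q * Rabs x ^ 3) <= (Rabs k2 * mu) * mu ^ 2) by
    (replace (Rabs k2 * mu * mu ^ 2) with (Rabs k2 * mu ^ 3) by ring; apply Rmult_le_compat_l; lra).
  nra.
Qed.

Lemma dcorr_abs_le x k2 c2 q q1 D mu : Rabs x <= mu -> Rabs k2 * mu <= 1 / 4 ->
  Rabs q <= 1 -> Rabs q1 <= D ->
  Rabs (2 * c2 * x ^ 2 - 6 * k2 * q1 * x ^ 3 + 12 * k2 ^ 2 * q * x ^ 4)
    <= (Rabs (2 * c2) + 3 / 2 * D + 3 / 4) * mu ^ 2.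
Proof.
  intros Hx Hk Hq Hq1.
  assert (HX := Rabs_pos x). assert (HK := Rabs_pos k2). assert (HQ := Rabs_pos q).
  assert (HQ1 := Rabs_pos q1). set (C := 2 * c2).
  eapply Rle_trans; [apply Rabs_triang|]. eapply Rle_trans; [apply Rplus_le_compat_r, Rabs_triang|].
  rewrite Rabs_Ropp, !Rabs_mult, <- !RPow_abs, (Rabs_right 6), (Rabs_right 12) by lra.
  assert (Rabs x ^ 2 <= mu ^ 2) by (apply pow_incr; lra).
  assert (Rabs x ^ 3 <= mu ^ 3) by (apply pow_incr; lra).
  assert (Rabs x ^ 4 <= mu ^ 4) by (apply pow_incr; lra).
  assert (0 <= Rabs x ^ 3) by (apply pow_le; lra).
  assert (Rabs C * Rabs x ^ 2 <= Rabs C * mu ^ 2)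
    by (apply Rmult_le_compat_l; [apply Rabs_pos | lra]).
  assert (Rabs q1 * Rabs x ^ 3 <= D * mu ^ 3) by (apply Rmult_le_compat; lra).
  assert (Rabs k2 * (Rabs q1 * Rabs x ^ 3) <= (Rabs k2 * mu) * (D * mu ^ 2)) by
    (replace (Rabs k2 * mu * (D * mu ^ 2)) with (Rabs k2 * (D * mu ^ 3)) by ring;
     apply Rmult_le_compat_l; lra).
  assert (Rabs q * Rabs x ^ 4 <= mu ^ 4) by (rewrite <- (Rmult_1_l (mu ^ 4)); apply Rmult_le_compat; try apply pow_le; lra).
  assert (Rabs k2 ^ 2 * (Rabs q * Rabs x ^ 4) <= (Rabs k2 * mu) ^ 2 * mu ^ 2) by
    (replace ((Rabs k2 * mu) ^ 2 * mu ^ 2) with (Rabs k2 ^ 2 * mu ^ 4) by ring;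
     apply Rmult_le_compat_l; [apply pow_le|]; lra).
  assert (0 <= Rabs k2 * mu) by nra.
  assert ((Rabs k2 * mu) ^ 2 <= 1 / 16) by nra.
  assert (0 <= D * mu ^ 2) by (apply Rmult_le_pos; [lra | apply pow2_ge_0]).
  assert (0 <= mu ^ 2) by apply pow2_ge_0.
  assert ((Rabs k2 * mu) * (D * mu ^ 2) <= 1 / 4 * (D * mu ^ 2)) by (apply Rmult_le_compat_r; lra).
  assert ((Rabs k2 * mu) ^ 2 * mu ^ 2 <= 1 / 16 * mu ^ 2) by (apply Rmult_le_compat_r; lra).
  lra.
Qed.

Definition phase (k2 k1 k0 u : R) : R := k2 * u ^ 2 + k1 * u + k0.
Definition dphase (k2 k1 u : R) : R := 2 * k2 * u + k1.
Definition sin_div_dphase (k2 k1 k0 u : R) : R := sin (phase k2 k1 k0 u) / dphase k2 k1 u.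

Lemma phase_continuous k2 k1 k0 u : continuous (fun u => cos (phase k2 k1 k0 u)) u.
Proof.
  apply (ex_derive_continuous (V := R_NormedModule)). unfold phase. auto_derive. easy.
Qed.

Section Nonstationary.
Variables k2 k1 k0 : R.
Variable P : piece.

Local Notation th := (phase k2 k1 k0).
Local Notation x u := (/ dphase k2 k1 u).
Local Notation q1 u := (2 * coef2 P * (u - center P)).

(* Two integrations by parts: the first produces the boundary term [sin th / th' * pquad P],
   the second [cos th * corr], leaving only [cos th * dcorr] with [dcorr = O(|th'|^-2)]. *)
Definition corr u := q1 u * x u ^ 2 - 2 * k2 * pquad P u * x u ^ 3.
Definition dcorr u :=
  2 * coef2 P * x u ^ 2 - 6 * k2 * q1 u * x u ^ 3 + 12 * k2 ^ 2 * pquad P u * x u ^ 4.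
Definition prim u := sin_div_dphase k2 k1 k0 u * pquad P u + cos (th u) * corr u.

Lemma prim_derive u : dphase k2 k1 u <> 0 ->
  is_derive prim u (cos (th u) * pquad P u + cos (th u) * dcorr u).
Proof.
  intros H. unfold prim, sin_div_dphase, corr, dcorr, pquad, quad, phase, dphase in *.
  auto_derive.
  - repeat split; auto.
  - replace (k2 * (u * (u * 1)) + k1 * u + k0) with (k2 * u ^ 2 + k1 * u + k0) by ring.
    field. auto.
Qed.

Lemma dcorr_continuous u : dphase k2 k1 u <> 0 -> continuous (fun u => cos (th u) * dcorr u) u.
Proof.
  intros H. apply (ex_derive_continuous (V := R_NormedModule)).
  unfold dcorr, pquad, quad, phase, dphase in *. auto_derive. repeat split; auto.
Qed.

Lemma prim_derive_continuous u : dphase k2 k1 u <> 0 ->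
  continuous (fun u => cos (th u) * pquad P u + cos (th u) * dcorr u) u.
Proof.
  intros H. apply (continuous_plus (V := R_NormedModule)); [|now apply dcorr_continuous].
  apply (continuous_mult (fun u => cos (th u)) (pquad P)); [apply phase_continuous | apply quad_continuous].
Qed.

Lemma Ipiece_cos_phase_by_parts : lo P <= hi P ->
  (forall u, lo P <= u <= hi P -> dphase k2 k1 u <> 0) ->
  Ipiece (fun u => cos (th u)) P =
  prim (hi P) - prim (lo P) - RInt (fun u => cos (th u) * dcorr u) (lo P) (hi P).
Proof.
  intros Hlh Hnz. unfold Ipiece. apply is_RInt_unique.
  assert (Hex : ex_RInt (fun u => cos (th u) * dcorr u) (lo P) (hi P)).
  { apply (ex_RInt_continuous (V := R_CompleteNormedModule)). intros u Hu.
    rewrite Rmin_left, Rmax_right in Hu by lra. now apply dcorr_continuous, Hnz. }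
  assert (HFTC : is_RInt (fun u => cos (th u) * pquad P u + cos (th u) * dcorr u)
                   (lo P) (hi P) (minus (prim (hi P)) (prim (lo P)))).
  { apply (is_RInt_derive (V := R_CompleteNormedModule)); intros u Hu;
      rewrite Rmin_left, Rmax_right in Hu by lra.
    - now apply prim_derive, Hnz.
    - now apply prim_derive_continuous, Hnz. }
  assert (H := is_RInt_minus _ _ _ _ _ _ HFTC
                 (RInt_correct (V := R_CompleteNormedModule) _ _ _ Hex)).
  eapply is_RInt_ext; [|exact H]. intros u _. unfold minus, plus, opp; simpl. ring.
Qed.

Section NonstationaryBounds.
Variable m : R.
Hypothesis Hok : piece_ok P.
Hypothesis Hm : 0 < m.
Hypothesis Hk : 4 * Rabs k2 <= m.
Hypothesis Hdd : forall u, lo P <= u <= hi P -> m <= Rabs (dphase k2 k1 u).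

Let Hnz u : lo P <= u <= hi P -> dphase k2 k1 u <> 0.
Proof. intros Hu E. specialize (Hdd u Hu). rewrite E, Rabs_R0 in Hdd. lra. Qed.

Let Hx u : lo P <= u <= hi P -> Rabs (x u) <= / m.
Proof. intros Hu. rewrite Rabs_inv. apply Rinv_le_contravar; auto. Qed.

Let Hkm : Rabs k2 * / m <= 1 / 4.
Proof. apply Rmult_le_reg_r with m; [lra|]. rewrite Rmult_assoc, Rinv_l by lra. lra. Qed.

Lemma cos_corr_abs_le u : lo P <= u <= hi P ->
  Rabs (cos (th u) * corr u) <= (pslope P + 1 / 2) * (/ m) ^ 2.
Proof.
  intros Hu. pose proof Hok as [_ [_ Hq]].
  rewrite Rabs_mult, <- (Rmult_1_l ((pslope P + _) * _)).
  apply Rmult_le_compat; try apply Rabs_pos; [apply Rabs_le, COS_bound|].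
  apply corr_abs_le; auto. now apply pquad_slope_le.
Qed.

Lemma RInt_cos_dcorr_abs_le :
  Rabs (RInt (fun u => cos (th u) * dcorr u) (lo P) (hi P))
    <= (5 / 2 * pslope P + 3 / 4) * (/ m) ^ 2.
Proof.
  pose proof Hok as [Hc [Hlen Hq]]. assert (Hslope := pslope_ge0 P Hok).
  assert (0 <= (/ m) ^ 2) by apply pow2_ge_0.
  eapply Rle_trans; [apply abs_RInt_le_const with
    (M := (Rabs (2 * coef2 P) + 3 / 2 * pslope P + 3 / 4) * (/ m) ^ 2)|].
  - lra.
  - apply (ex_RInt_continuous (V := R_CompleteNormedModule)). intros u Hu.
    rewrite Rmin_left, Rmax_right in Hu by lra. now apply dcorr_continuous, Hnz.
  - intros u Hu. rewrite Rabs_mult, <- (Rmult_1_l (_ * (/ m) ^ 2)).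
    apply Rmult_le_compat; try apply Rabs_pos; [apply Rabs_le, COS_bound|].
    apply dcorr_abs_le; auto. now apply pquad_slope_le.
  - replace ((hi P - lo P) * ((Rabs (2 * coef2 P) + 3 / 2 * pslope P + 3 / 4) * (/ m) ^ 2))
      with (pslope P * (/ m) ^ 2 + (hi P - lo P) * ((3 / 2 * pslope P + 3 / 4) * (/ m) ^ 2))
      by (unfold pslope; ring).
    assert (0 <= (1 - (hi P - lo P)) * ((3 / 2 * pslope P + 3 / 4) * (/ m) ^ 2))
      by (apply Rmult_le_pos; [lra | apply Rmult_le_pos; lra]).
    lra.
Qed.

Lemma Ipiece_nonstationary :
  Rabs (Ipiece (fun u => cos (th u)) P -
        (sin_div_dphase k2 k1 k0 (hi P) * pquad P (hi P) -
         sin_div_dphase k2 k1 k0 (lo P) * pquad P (lo P)))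
    <= (5 * pslope P + 2) * (/ m) ^ 2.
Proof.
  assert (Hlh := piece_ok_lo_le_hi P Hok).
  rewrite Ipiece_cos_phase_by_parts by auto. unfold prim.
  assert (HR2 := RInt_cos_dcorr_abs_le).
  set (R2 := RInt (fun u => cos (th u) * dcorr u) (lo P) (hi P)) in *.
  match goal with |- Rabs ?e <= _ =>
    replace e with (cos (th (hi P)) * corr (hi P) + - (cos (th (lo P)) * corr (lo P)) + - R2)
      by ring end.
  eapply Rle_trans; [apply Rabs_triang|]. rewrite Rabs_Ropp.
  eapply Rle_trans; [apply Rplus_le_compat_r, Rabs_triang|]. rewrite Rabs_Ropp.
  assert (Hh := cos_corr_abs_le (hi P) ltac:(lra)).
  assert (Hl := cos_corr_abs_le (lo P) ltac:(lra)).
  assert (0 <= (/ m) ^ 2) by apply pow2_ge_0.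
  assert (0 <= pslope P * (/ m) ^ 2) by (apply Rmult_le_pos; [now apply pslope_ge0 | lra]).
  lra.
Qed.

End NonstationaryBounds.

End Nonstationary.

Lemma ex_RInt_continuous_R (f : R -> R) p q : (forall u, continuous f u) -> ex_RInt f p q.
Proof. intros Hf. apply (ex_RInt_continuous (V := R_CompleteNormedModule)). intros; apply Hf. Qed.

Lemma Ipiece_trivial_bound (f : R -> R) P : piece_ok P -> (forall u, continuous f u) ->
  (forall u, Rabs (f u) <= 1) -> Rabs (Ipiece f P) <= hi P - lo P.
Proof.
  intros [Hc [_ Hq]] Hf Hf1. unfold Ipiece. rewrite <- (Rmult_1_r (hi P - lo P)).
  apply abs_RInt_le_const; [lra | |].
  - apply ex_RInt_continuous_R. intros u.
    apply (continuous_mult f (pquad P)); [apply Hf | apply quad_continuous].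
  - intros t Ht. rewrite Rabs_mult, <- (Rmult_1_r 1).
    apply Rmult_le_compat; try apply Rabs_pos; auto.
Qed.

(* One integration by parts against the primitive [Phi] of [f] vanishing at [lo P]. *)
Lemma Ipiece_primitive_bound (f : R -> R) P M : piece_ok P -> (forall u, continuous f u) ->
  (forall x, Rabs (RInt f (lo P) x) <= M) ->
  Rabs (Ipiece f P) <= M * (1 + (hi P - lo P) * pslope P).
Proof.
  intros Hok Hf HM. pose proof Hok as [Hc [_ Hq]].
  set (Phi := fun x => RInt f (lo P) x).
  set (q1 := fun t => 2 * coef2 P * (t - center P)).
  assert (HPhi : forall x, is_derive Phi x (f x)).
  { intros x. apply (is_derive_RInt (V := R_NormedModule) f Phi (lo P) x); [|apply Hf].
    apply filter_forall. intros y.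
    apply (RInt_correct (V := R_CompleteNormedModule)), ex_RInt_continuous_R, Hf. }
  assert (HPhic : forall x, continuous Phi x).
  { intros x. apply (ex_derive_continuous (V := R_NormedModule)). eexists; apply HPhi. }
  assert (Hq1c : forall x, continuous (fun t => Phi t * q1 t) x).
  { intros x. apply (continuous_mult Phi q1); [apply HPhic|].
    apply (ex_derive_continuous (V := R_NormedModule)). unfold q1. auto_derive. easy. }
  assert (HIBP : is_RInt (fun t => f t * pquad P t + Phi t * q1 t) (lo P) (hi P)
                   (minus (Phi (hi P) * pquad P (hi P)) (Phi (lo P) * pquad P (lo P)))).
  { apply (is_RInt_derive (V := R_CompleteNormedModule) (fun t => Phi t * pquad P t)).
    - intros x _. apply (is_derive_mult Phi (pquad P)); [apply HPhi | apply quad_derive |].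
      intros; apply Rmult_comm.
    - intros x _. apply (continuous_plus (V := R_NormedModule)); [|apply Hq1c].
      apply (continuous_mult f (pquad P)); [apply Hf | apply quad_continuous]. }
  set (R2 := RInt (fun t => Phi t * q1 t) (lo P) (hi P)).
  assert (Hex : ex_RInt (fun t => Phi t * q1 t) (lo P) (hi P)) by now apply ex_RInt_continuous_R.
  assert (HI : Ipiece f P = Phi (hi P) * pquad P (hi P) - R2).
  { assert (Hlo : Phi (lo P) = 0) by (unfold Phi; rewrite RInt_point; reflexivity).
    unfold Ipiece. apply is_RInt_unique.
    assert (H := is_RInt_minus _ _ _ _ _ _ HIBP (RInt_correct (V := R_CompleteNormedModule) _ _ _ Hex)).
    replace (Phi (hi P) * pquad P (hi P) - R2)
      with (minus (minus (Phi (hi P) * pquad P (hi P)) (Phi (lo P) * pquad P (lo P))) R2)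
      by (rewrite Hlo; unfold minus, plus, opp; simpl; ring).
    eapply is_RInt_ext; [|exact H]. intros u _. unfold minus, plus, opp; simpl. ring. }
  assert (HM0 : 0 <= M) by (eapply Rle_trans; [apply Rabs_pos | apply (HM (lo P))]).
  assert (B1 : Rabs (Phi (hi P) * pquad P (hi P)) <= M).
  { rewrite Rabs_mult, <- (Rmult_1_r M).
    apply Rmult_le_compat; try apply Rabs_pos; [apply HM | apply Hq; lra]. }
  assert (B2 : Rabs R2 <= (hi P - lo P) * (M * pslope P)).
  { apply abs_RInt_le_const; [lra | exact Hex |]. intros t Ht.
    rewrite Rabs_mult. apply Rmult_le_compat; try apply Rabs_pos; [apply HM|].
    now apply pquad_slope_le. }
  rewrite HI. eapply Rle_trans; [apply Rabs_triang|]. rewrite Rabs_Ropp. nra.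
Qed.

(** * Fresnel integrals *)

Lemma PI_gt_3 : 3 < PI.
Proof. assert (H := PI2_3_2). lra. Qed.

Definition cos_sq (c v : R) : R := cos (PI * v ^ 2 + c).

Lemma cos_sq_continuous c v : continuous (cos_sq c) v.
Proof. apply (ex_derive_continuous (V := R_NormedModule)). unfold cos_sq. auto_derive. easy. Qed.

Lemma Rabs_RInt_swap (f : R -> R) p q : ex_RInt f q p -> Rabs (RInt f p q) = Rabs (RInt f q p).
Proof.
  intros H. rewrite <- (opp_RInt_swap (V := R_CompleteNormedModule) f q p H).
  apply Rabs_Ropp.
Qed.

Section CosSqTail.
Variables c p q : R.
Hypothesis Hpq : p <= q.
Hypothesis Hfar : forall v, p <= v <= q -> 1 <= Rabs v.

Let Hnz v : p <= v <= q -> v <> 0.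
Proof. intros H E. specialize (Hfar v H). rewrite E, Rabs_R0 in Hfar. lra. Qed.

Ltac nonzero :=
  repeat match goal with
  | |- _ /\ _ => split
  | |- _ * _ <> 0 => apply Rmult_integral_contrapositive_currified
  | |- True => exact I
  end; auto; pose proof PI_gt_3; lra.

Lemma RInt_cos_sq_by_parts :
  RInt (cos_sq c) p q =
  sin (PI * q ^ 2 + c) / (2 * PI * q) - sin (PI * p ^ 2 + c) / (2 * PI * p) +
  RInt (fun v => sin (PI * v ^ 2 + c) / (2 * PI * v ^ 2)) p q.
Proof.
  set (r := fun v => sin (PI * v ^ 2 + c) / (2 * PI * v ^ 2)).
  assert (Hr : ex_RInt r p q).
  { apply (ex_RInt_continuous (V := R_CompleteNormedModule)). intros x Hx.
    rewrite Rmin_left, Rmax_right in Hx by lra. assert (H0 := Hnz x Hx).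
    apply (ex_derive_continuous (V := R_NormedModule)). unfold r. auto_derive. nonzero. }
  assert (HFTC : is_RInt (fun v => cos_sq c v - r v) p q
      (minus (sin (PI * q ^ 2 + c) / (2 * PI * q)) (sin (PI * p ^ 2 + c) / (2 * PI * p)))).
  { apply (is_RInt_derive (V := R_CompleteNormedModule)
             (fun v => sin (PI * v ^ 2 + c) / (2 * PI * v))); intros x Hx;
      rewrite Rmin_left, Rmax_right in Hx by lra; assert (H0 := Hnz x Hx).
    - unfold cos_sq, r. auto_derive; [nonzero|].
      replace (PI * (x * (x * 1)) + c) with (PI * x ^ 2 + c) by ring. field. nonzero.
    - apply (ex_derive_continuous (V := R_NormedModule)). unfold cos_sq, r. auto_derive. nonzero. }
  assert (H := is_RInt_plus _ _ _ _ _ _ HFTC (RInt_correct (V := R_CompleteNormedModule) _ _ _ Hr)).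
  assert (H' : is_RInt (cos_sq c) p q (plus (minus (sin (PI * q ^ 2 + c) / (2 * PI * q))
             (sin (PI * p ^ 2 + c) / (2 * PI * p))) (RInt r p q))).
  { eapply is_RInt_ext; [|exact H]. intros x _. unfold plus; simpl. ring. }
  now rewrite (is_RInt_unique _ _ _ _ H').
Qed.

Lemma RInt_sin_sq_div_bound :
  Rabs (RInt (fun v => sin (PI * v ^ 2 + c) / (2 * PI * v ^ 2)) p q) <= 2 * / (2 * PI).
Proof.
  assert (HPI := PI_gt_3).
  set (r := fun v => sin (PI * v ^ 2 + c) / (2 * PI * v ^ 2)).
  set (g := fun v => / (2 * PI * v ^ 2)).
  set (k := fun v => - / (2 * PI * v)).
  assert (Hg : is_RInt g p q (k q - k p)).
  { apply (is_RInt_derive (V := R_CompleteNormedModule) k); intros x Hx;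
      rewrite Rmin_left, Rmax_right in Hx by lra; assert (H0 := Hnz x Hx).
    - unfold k, g. auto_derive; [nonzero | field; nonzero].
    - apply (ex_derive_continuous (V := R_NormedModule)). unfold g. auto_derive. nonzero. }
  assert (Hr : ex_RInt r p q).
  { apply (ex_RInt_continuous (V := R_CompleteNormedModule)). intros x Hx.
    rewrite Rmin_left, Rmax_right in Hx by lra. assert (H0 := Hnz x Hx).
    apply (ex_derive_continuous (V := R_NormedModule)). unfold r. auto_derive. nonzero. }
  assert (Hgn : is_RInt (fun v => - g v) p q (- (k q - k p)))
    by apply (is_RInt_opp (V := R_NormedModule) g _ _ _ Hg).
  assert (Hrg : forall v, p < v < q -> - g v <= r v <= g v).
  { intros v Hv. assert (H0 : v <> 0) by (apply Hnz; lra).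
    assert (0 < v ^ 2) by now apply pow2_gt_0.
    assert (0 < / (2 * PI * v ^ 2)) by (apply Rinv_0_lt_compat; nra).
    unfold r, g, Rdiv. assert (S := SIN_bound (PI * v ^ 2 + c)). nra. }
  assert (L1 := RInt_le r g p q Hpq Hr (ex_intro _ _ Hg) (fun x H => proj2 (Hrg x H))).
  assert (L2 := RInt_le _ r p q Hpq (ex_intro _ _ Hgn) Hr (fun x H => proj1 (Hrg x H))).
  rewrite (is_RInt_unique _ _ _ _ Hg) in L1. rewrite (is_RInt_unique _ _ _ _ Hgn) in L2.
  assert (Hk : forall v, p <= v <= q -> Rabs (k v) <= / (2 * PI)).
  { intros v Hv. assert (H1 := Hfar v Hv). unfold k.
    rewrite Rabs_Ropp, Rabs_inv, Rabs_mult, (Rabs_right (2 * PI)) by lra.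
    apply Rinv_le_contravar; nra. }
  assert (Bp := Hk p ltac:(lra)). assert (Bq := Hk q ltac:(lra)).
  apply Rabs_le_between in Bp, Bq. apply Rabs_le. fold r. lra.
Qed.

Lemma RInt_cos_sq_tail : Rabs (RInt (cos_sq c) p q) <= 1.
Proof.
  assert (HPI := PI_gt_3).
  assert (Hend : forall v, p <= v <= q -> Rabs (sin (PI * v ^ 2 + c) / (2 * PI * v)) <= / (2 * PI)).
  { intros v Hv. assert (H1 := Hfar v Hv).
    unfold Rdiv. rewrite Rabs_mult, Rabs_inv, Rabs_mult, (Rabs_right (2 * PI)) by lra.
    assert (Sb : Rabs (sin (PI * v ^ 2 + c)) <= 1) by apply Rabs_le, SIN_bound.
    assert (0 < / (2 * PI * Rabs v)) by (apply Rinv_0_lt_compat; nra).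
    apply Rle_trans with (1 * / (2 * PI * Rabs v)); [apply Rmult_le_compat_r; lra|].
    rewrite Rmult_1_l. apply Rinv_le_contravar; nra. }
  assert (Bp := Hend p ltac:(lra)). assert (Bq := Hend q ltac:(lra)).
  assert (Br := RInt_sin_sq_div_bound).
  assert (/ (2 * PI) < 1 / 6).
  { apply Rmult_lt_reg_r with (2 * PI); [lra|]. rewrite Rinv_l by lra. lra. }
  rewrite RInt_cos_sq_by_parts.
  apply Rabs_le_between in Bp, Bq, Br. apply Rabs_le. lra.
Qed.

End CosSqTail.

Lemma ex_RInt_cos_sq c p q : ex_RInt (cos_sq c) p q.
Proof. apply ex_RInt_continuous_R, cos_sq_continuous. Qed.

Lemma RInt_cos_sq_short c p q : p <= q <= p + 1 -> Rabs (RInt (cos_sq c) p q) <= 1.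
Proof.
  intros H. eapply Rle_trans; [apply abs_RInt_le_const with (M := 1); [lra | apply ex_RInt_cos_sq |]|].
  - intros t _. apply Rabs_le, COS_bound.
  - lra.
Qed.

Lemma RInt_cos_sq_bound c t : Rabs (RInt (cos_sq c) 0 t) <= 2.
Proof.
  assert (Hex := ex_RInt_cos_sq c).
  destruct (Rle_dec t 1) as [Ht1|Ht1]; destruct (Rle_dec (-1) t) as [Ht2|Ht2].
  - destruct (Rle_dec 0 t).
    + assert (H := RInt_cos_sq_short c 0 t ltac:(lra)). lra.
    + rewrite Rabs_RInt_swap by apply Hex.
      assert (H := RInt_cos_sq_short c t 0 ltac:(lra)). lra.
  - rewrite <- (RInt_Chasles (V := R_CompleteNormedModule) (cos_sq c) 0 (-1) t (Hex _ _) (Hex _ _)).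
    eapply Rle_trans; [apply Rabs_triang|].
    rewrite (Rabs_RInt_swap _ 0 (-1)), (Rabs_RInt_swap _ (-1) t) by apply Hex.
    assert (H := RInt_cos_sq_short c (-1) 0 ltac:(lra)).
    assert (H' := RInt_cos_sq_tail c t (-1) ltac:(lra)
                    ltac:(intros v Hv; rewrite Rabs_left by lra; lra)).
    lra.
  - rewrite <- (RInt_Chasles (V := R_CompleteNormedModule) (cos_sq c) 0 1 t (Hex _ _) (Hex _ _)).
    eapply Rle_trans; [apply Rabs_triang|].
    assert (H := RInt_cos_sq_short c 0 1 ltac:(lra)).
    assert (H' := RInt_cos_sq_tail c 1 t ltac:(lra)
                    ltac:(intros v Hv; rewrite Rabs_right by lra; lra)).
    lra.
  - lra.
Qed.

Lemma RInt_cos_quadratic_from_vertex al c x0 x : al <> 0 ->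
  Rabs (RInt (fun u => cos (PI * al * (u - x0) ^ 2 + c)) x0 x) <= 2 / sqrt (Rabs al).
Proof.
  intros Hal.
  assert (Hpos : 0 < Rabs al) by now apply Rabs_pos_lt.
  set (s := sqrt (Rabs al)).
  assert (Hs : 0 < s) by now apply sqrt_lt_R0.
  assert (Hss : s * s = Rabs al) by (apply sqrt_sqrt; lra).
  set (c' := if Rle_dec 0 al then c else - c).
  assert (Hlin : forall u, cos (PI * al * (u - x0) ^ 2 + c) = cos_sq c' (s * u + - s * x0)).
  { intros u. unfold cos_sq, c'. destruct (Rle_dec 0 al).
    - rewrite Rabs_right in Hss by lra. f_equal. rewrite <- Hss. ring.
    - rewrite Rabs_left in Hss by lra. rewrite <- cos_neg. f_equal.
      replace al with (- (s * s)) by lra. ring. }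
  rewrite (RInt_ext _ (fun u => cos_sq c' (s * u + - s * x0))) by (intros; apply Hlin).
  assert (E := RInt_comp_lin (V := R_CompleteNormedModule) (cos_sq c') s (- s * x0) x0 x
                 (ex_RInt_cos_sq _ _ _)).
  rewrite (RInt_scal (V := R_CompleteNormedModule)) in E.
  2: { apply ex_RInt_continuous_R. intros u.
       apply (ex_derive_continuous (V := R_NormedModule)). unfold cos_sq. auto_derive. easy. }
  replace (s * x0 + - s * x0) with 0 in E by ring.
  change (scal s ?y) with (s * y) in E.
  assert (F := RInt_cos_sq_bound c' (s * x + - s * x0)). rewrite <- E in F.
  rewrite Rabs_mult, (Rabs_right s) in F by lra.
  apply Rmult_le_reg_l with s; [lra|]. unfold Rdiv.
  replace (s * (2 * / s)) with 2 by (field; lra). exact F.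
Qed.

Lemma RInt_cos_quadratic_bound al c x0 p x : al <> 0 ->
  Rabs (RInt (fun u => cos (PI * al * (u - x0) ^ 2 + c)) p x) <= 4 / sqrt (Rabs al).
Proof.
  intros Hal.
  set (f := fun u => cos (PI * al * (u - x0) ^ 2 + c)).
  assert (Hex : forall s t, ex_RInt f s t).
  { intros s t. apply ex_RInt_continuous_R. intros u.
    apply (ex_derive_continuous (V := R_NormedModule)). unfold f. auto_derive. easy. }
  rewrite <- (RInt_Chasles (V := R_CompleteNormedModule) f p x0 x (Hex _ _) (Hex _ _)).
  eapply Rle_trans; [apply Rabs_triang|].
  rewrite (Rabs_RInt_swap f p x0) by apply Hex.
  assert (H1 := RInt_cos_quadratic_from_vertex al c x0 p Hal).
  assert (H2 := RInt_cos_quadratic_from_vertex al c x0 x Hal).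
  fold f in H1, H2. unfold Rdiv in *. lra.
Qed.

(** * The spline [Tfun] *)

Definition Tpiece (eps delta a b : R) (i : nat) : piece :=
  match i with
  | O => Piece (a - eps) (a - eps / 2) 0 (2 / eps ^ 2) (a - eps)
  | 1 => Piece (a - eps / 2) a 1 (- (2 / eps ^ 2)) a
  | 2 => Piece a b 1 0 a
  | 3 => Piece b (b + delta / 2) 1 (- (2 / delta ^ 2)) b
  | _ => Piece (b + delta / 2) (b + delta) 0 (2 / delta ^ 2) (b + delta)
  end.

Definition Tosc (eps delta a b k2 k1 k0 : R) : R :=
  Ipieces (fun u => cos (phase k2 k1 k0 u)) (Tpiece eps delta a b) 4.

Lemma bump_half_le k t : 0 < k -> Rabs t <= k / 2 -> 0 <= 2 / k ^ 2 * t ^ 2 <= 1 / 2.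
Proof.
  intros Hk Ht.
  replace (2 / k ^ 2 * t ^ 2) with (2 * (t / k) ^ 2) by (field; lra).
  assert (Htk : Rabs (t / k) <= 1 / 2).
  { unfold Rdiv. rewrite Rabs_mult, Rabs_inv, (Rabs_right k) by lra.
    apply Rmult_le_reg_r with k; [lra|]. rewrite Rmult_assoc, Rinv_l by lra. lra. }
  apply Rabs_le_between in Htk. nra.
Qed.

Section Spline.
Variables eps delta a b : R.
Hypothesis Heps : 0 < eps <= 1.
Hypothesis Hdelta : 0 < delta <= 1.
Hypothesis Ha : 0 <= a.
Hypothesis Hab : a <= b.
Hypothesis Hb : b <= 1.

Local Notation T := (Tfun eps delta a b).
Local Notation TP := (Tpiece eps delta a b).

Lemma Tfun_outside u : u <= a - eps \/ b + delta <= u -> T u = 0.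
Proof.
  intros Hu. unfold Tfun.
  destruct (Rle_dec u (a - eps)); [easy|].
  destruct (Rle_dec u (a - eps / 2)); [lra|].
  destruct (Rle_dec u a); [lra|].
  destruct (Rlt_dec u b); [lra|].
  destruct (Rlt_dec u (b + delta / 2)); [lra|].
  destruct (Rlt_dec u (b + delta)); [lra | easy].
Qed.

Lemma Tfun_eq_pquad i u : (i <= 4)%nat -> lo (TP i) <= u <= hi (TP i) ->
  T u = pquad (TP i) u.
Proof.
  intros Hi Hu. unfold pquad, quad, Tfun.
  destruct i as [|[|[|[|[|i]]]]]; simpl in Hu |- *; try lia.
  - destruct (Rle_dec u (a - eps)).
    + replace u with (a - eps) by lra. ring.
    + destruct (Rle_dec u (a - eps / 2)); [ring | lra].
  - destruct (Rle_dec u (a - eps)); [lra|].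
    destruct (Rle_dec u (a - eps / 2)).
    + replace u with (a - eps / 2) by lra. field. lra.
    + destruct (Rle_dec u a); [ring | lra].
  - destruct (Rle_dec u (a - eps)); [lra|].
    destruct (Rle_dec u (a - eps / 2)); [lra|].
    destruct (Rle_dec u a); [replace u with a by lra; ring|].
    destruct (Rlt_dec u b); [ring|].
    destruct (Rlt_dec u (b + delta / 2)); [|lra].
    replace u with b by lra. ring.
  - destruct (Rle_dec u (a - eps)); [lra|].
    destruct (Rle_dec u (a - eps / 2)); [lra|].
    destruct (Rle_dec u a).
    + replace u with a by lra. replace b with a by lra. ring.
    + destruct (Rlt_dec u b); [lra|].
      destruct (Rlt_dec u (b + delta / 2)); [ring|].
      replace u with (b + delta / 2) by lra.
      destruct (Rlt_dec (b + delta / 2) (b + delta)); [field | ]; lra.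
  - destruct (Rle_dec u (a - eps)); [lra|].
    destruct (Rle_dec u (a - eps / 2)); [lra|].
    destruct (Rle_dec u a); [lra|].
    destruct (Rlt_dec u b); [lra|].
    destruct (Rlt_dec u (b + delta / 2)); [lra|].
    destruct (Rlt_dec u (b + delta)); [ring|].
    replace u with (b + delta) by lra. ring.
Qed.

Lemma Tpiece_chained : chained TP 4.
Proof. intros i Hi. destruct i as [|[|[|[|i]]]]; easy || lia. Qed.

Lemma Tpiece_within i : (i <= 4)%nat -> a - eps <= lo (TP i) /\ hi (TP i) <= b + delta.
Proof. intros Hi. destruct i as [|[|[|[|[|i]]]]]; simpl; try lia; lra. Qed.

Lemma Tpiece_ok i : (i <= 4)%nat -> piece_ok (TP i).
Proof.
  intros Hi. unfold piece_ok, pquad, quad.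
  destruct i as [|[|[|[|[|i]]]]]; cbn [Tpiece lo hi coef0 coef2 center]; try lia;
    (split; [lra | split; [lra|]]); intros u Hu.
  - destruct (bump_half_le eps (u - (a - eps))); [lra | apply Rabs_le; lra |].
    apply Rabs_le. lra.
  - destruct (bump_half_le eps (u - a)); [lra | apply Rabs_le; lra |].
    apply Rabs_le. lra.
  - apply Rabs_le. lra.
  - destruct (bump_half_le delta (u - b)); [lra | apply Rabs_le; lra |].
    apply Rabs_le. lra.
  - destruct (bump_half_le delta (u - (b + delta))); [lra | apply Rabs_le; lra |].
    apply Rabs_le. lra.
Qed.

Lemma Tfun_abs_le_1 u : Rabs (T u) <= 1.
Proof.
  destruct (Rle_dec u (a - eps)) as [H|H]; [rewrite Tfun_outside by auto; rewrite Rabs_R0; lra|].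
  destruct (Rle_dec (b + delta) u) as [H'|H']; [rewrite Tfun_outside by auto; rewrite Rabs_R0; lra|].
  assert (Hin : exists i, (i <= 4)%nat /\ lo (TP i) <= u <= hi (TP i)).
  { destruct (Rle_dec u (a - eps / 2)); [exists O; simpl; split; [lia | lra]|].
    destruct (Rle_dec u a); [exists 1%nat; simpl; split; [lia | lra]|].
    destruct (Rle_dec u b); [exists 2%nat; simpl; split; [lia | lra]|].
    destruct (Rle_dec u (b + delta / 2)); [exists 3%nat; simpl; split; [lia | lra]|].
    exists 4%nat; simpl; split; [lia | lra]. }
  destruct Hin as [i [Hi Hu]]. rewrite (Tfun_eq_pquad i) by auto.
  now apply Tpiece_ok.
Qed.

Lemma Tfun_weighted_le_9 u : Rabs (T u) * (1 + Rabs u) ^ 2 <= 9.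
Proof.
  destruct (Rle_dec u (a - eps)) as [H|H]; [rewrite Tfun_outside, Rabs_R0 by auto; lra|].
  destruct (Rle_dec (b + delta) u) as [H'|H']; [rewrite Tfun_outside, Rabs_R0 by auto; lra|].
  assert (Hu : Rabs u <= 2) by (apply Rabs_le; lra).
  assert (HT := Tfun_abs_le_1 u). assert (H0 := Rabs_pos (T u)). assert (H1 := Rabs_pos u).
  assert ((1 + Rabs u) ^ 2 <= 9) by nra. assert (0 <= (1 + Rabs u) ^ 2) by apply pow2_ge_0.
  nra.
Qed.

Lemma Tpiece_sum (g : R -> R -> R) :
  sum_f_R0 (fun i => g (hi (TP i) - lo (TP i)) (pslope (TP i))) 4 =
  2 * g (eps / 2) (2 / eps) + g (b - a) 0 + 2 * g (delta / 2) (2 / delta).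
Proof.
  assert (Hs : forall k, 0 < k ->
    k / 2 * Rabs (2 * (2 / k ^ 2)) = 2 / k /\ k / 2 * Rabs (2 * - (2 / k ^ 2)) = 2 / k).
  { intros k Hk. assert (0 < 2 / k ^ 2) by (apply Rdiv_lt_0_compat; [lra | apply pow_lt; lra]).
    rewrite Rabs_right, Rabs_left by lra. split; field; lra. }
  destruct (Hs eps) as [Hs0 Hs1]; [lra|]. destruct (Hs delta) as [Hs3 Hs4]; [lra|].
  unfold pslope; cbn [sum_f_R0 Tpiece lo hi coef2].
  replace (a - eps / 2 - (a - eps)) with (eps / 2) by field.
  replace (a - (a - eps / 2)) with (eps / 2) by field.
  replace (b + delta / 2 - b) with (delta / 2) by field.
  replace (b + delta - (b + delta / 2)) with (delta / 2) by field.
  rewrite Hs0, Hs1, Hs3, Hs4, Rmult_0_r, Rabs_R0, Rmult_0_r. ring.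
Qed.

Lemma is_RInt_gen_Tfun (f : R -> R) : (forall u, continuous f u) ->
  is_RInt_gen (fun u => f u * T u) (Rbar_locally m_infty) (Rbar_locally p_infty) (Ipieces f TP 4).
Proof.
  intros Hf. apply is_RInt_gen_Ipieces; auto using Tpiece_chained.
  - intros i Hi. now apply piece_ok_lo_le_hi, Tpiece_ok.
  - intros i u Hi Hu. now rewrite (Tfun_eq_pquad i u).
  - intros u Hu. rewrite Tfun_outside; auto. ring.
Qed.

Lemma Tosc_nonstationary k2 k1 k0 m : 0 < m -> 4 * Rabs k2 <= m ->
  (forall u, a - eps <= u <= b + delta -> m <= Rabs (dphase k2 k1 u)) ->
  Rabs (Tosc eps delta a b k2 k1 k0) <= (20 / eps + 20 / delta + 10) * (/ m) ^ 2.
Proof.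
  intros Hm Hk Hdd.
  set (F := fun u => sin_div_dphase k2 k1 k0 u * T u).
  set (h := fun i => (5 * pslope (TP i) + 2) * (/ m) ^ 2).
  assert (Hpiece : forall i, (i <= 4)%nat ->
    Rabs (Ipiece (fun u => cos (phase k2 k1 k0 u)) (TP i) - (F (hi (TP i)) - F (lo (TP i))))
      <= h i).
  { intros i Hi. assert (Hok := Tpiece_ok i Hi).
    assert (Hlh := piece_ok_lo_le_hi _ Hok).
    assert (Hin : a - eps <= lo (TP i) /\ hi (TP i) <= b + delta) by (apply Tpiece_within; auto).
    unfold F. rewrite !(Tfun_eq_pquad i) by (auto; lra).
    apply Ipiece_nonstationary; auto. intros u Hu. apply Hdd. lra. }
  assert (H := Ipieces_telescope_bound _ F TP h 4 Tpiece_chained Hpiece).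
  assert (Hends : F (hi (TP 4)) - F (lo (TP O)) = 0).
  { unfold F. simpl. rewrite !Tfun_outside by (auto; lra). ring. }
  rewrite Hends, Rminus_0_r in H. unfold Tosc. eapply Rle_trans; [exact H|].
  unfold h. rewrite (Tpiece_sum (fun _ s => (5 * s + 2) * (/ m) ^ 2)).
  right. field. lra.
Qed.

Lemma Ipieces_Tpiece_primitive_bound (f : R -> R) M : (forall u, continuous f u) ->
  (forall s x, Rabs (RInt f s x) <= M) -> Rabs (Ipieces f TP 4) <= 9 * M.
Proof.
  intros Hf HM.
  eapply Rle_trans.
  - apply (Ipieces_abs_le f TP (fun i => M * (1 + (hi (TP i) - lo (TP i)) * pslope (TP i)))).
    intros i Hi. apply Ipiece_primitive_bound; auto. now apply Tpiece_ok.
  - rewrite (Tpiece_sum (fun l s => M * (1 + l * s))).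
    right. field. lra.
Qed.

Lemma Ipieces_Tpiece_trivial_bound (f : R -> R) : (forall u, continuous f u) ->
  (forall u, Rabs (f u) <= 1) -> Rabs (Ipieces f TP 4) <= 3.
Proof.
  intros Hf Hf1.
  eapply Rle_trans.
  - apply (Ipieces_abs_le f TP (fun i => hi (TP i) - lo (TP i))).
    intros i Hi. apply Ipiece_trivial_bound; auto. now apply Tpiece_ok.
  - rewrite (Tpiece_sum (fun l _ => l)). lra.
Qed.

End Spline.

(** * The fractional Fourier transform of [Tfun] *)

(* [2 * PI] times the exponent of the kernel of [frft] at [phi] is the quadratic phase
   [phase (frft_k2 phi) (frft_k1 phi w) (frft_k0 phi w)] in the integration variable. *)
Definition frft_k2 (phi : R) : R := PI * cos phi / sin phi.
Definition frft_k1 (phi w : R) : R := - (2 * PI * w / sin phi).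
Definition frft_k0 (phi w : R) : R := PI * w ^ 2 * cos phi / sin phi.

Section FrftRegimes.
Variables eps delta a b phi w k0 : R.
Hypothesis Heps : 0 < eps <= 1.
Hypothesis Hdelta : 0 < delta <= 1.
Hypothesis Ha : 0 <= a.
Hypothesis Hab : a <= b.
Hypothesis Hb : b <= 1.
Hypothesis Hs : sin phi <> 0.

Local Notation S := (Tosc eps delta a b (frft_k2 phi) (frft_k1 phi w) k0).

Lemma dphase_frft u : dphase (frft_k2 phi) (frft_k1 phi w) u = 2 * PI * (cos phi * u - w) / sin phi.
Proof. unfold dphase, frft_k2, frft_k1. field. exact Hs. Qed.

Lemma frft_k2_abs_le : 4 <= Rabs w -> 4 * Rabs (frft_k2 phi) <= PI * Rabs w / Rabs (sin phi).
Proof.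
  intros Hw. assert (HPI := PI_gt_3).
  assert (Hc1 : Rabs (cos phi) <= 1) by apply Rabs_le, COS_bound.
  assert (0 < / Rabs (sin phi)) by now apply Rinv_0_lt_compat, Rabs_pos_lt.
  unfold frft_k2, Rdiv. rewrite !Rabs_mult, Rabs_inv, (Rabs_right PI) by lra.
  assert (0 <= PI * / Rabs (sin phi) * (Rabs w - 4 * Rabs (cos phi)))
    by (apply Rmult_le_pos; [apply Rmult_le_pos|]; lra).
  lra.
Qed.

Lemma frft_dphase_abs_ge u : 4 <= Rabs w -> -1 <= u <= 2 ->
  PI * Rabs w / Rabs (sin phi) <= Rabs (dphase (frft_k2 phi) (frft_k1 phi w) u).
Proof.
  intros Hw Hu. assert (HPI := PI_gt_3).
  assert (Hc1 : Rabs (cos phi) <= 1) by apply Rabs_le, COS_bound.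
  rewrite dphase_frft. unfold Rdiv.
  rewrite !Rabs_mult, Rabs_inv, (Rabs_right 2), (Rabs_right PI) by lra.
  assert (Rabs (cos phi * u) <= 2).
  { rewrite Rabs_mult. assert (Rabs u <= 2) by (apply Rabs_le; lra).
    assert (0 <= Rabs u) by apply Rabs_pos. nra. }
  assert (Rabs w / 2 <= Rabs (cos phi * u - w)).
  { assert (Htri := Rabs_triang_inv w (cos phi * u)).
    rewrite <- (Rabs_Ropp (cos phi * u - w)).
    replace (- (cos phi * u - w)) with (w - cos phi * u) by ring. lra. }
  assert (0 < / Rabs (sin phi)) by now apply Rinv_0_lt_compat, Rabs_pos_lt.
  assert (0 <= PI * / Rabs (sin phi) * (2 * Rabs (cos phi * u - w) - Rabs w))
    by (apply Rmult_le_pos; [apply Rmult_le_pos|]; lra).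
  lra.
Qed.

Lemma Tosc_frft_far : 4 <= Rabs w ->
  / sqrt (Rabs (sin phi)) * Rabs S * (1 + Rabs w) ^ 2 <= 20 / eps + 20 / delta + 10.
Proof.
  intros Hw. assert (HPI := PI_gt_3).
  assert (Hs0 : 0 < Rabs (sin phi)) by now apply Rabs_pos_lt.
  assert (Hs1 : Rabs (sin phi) <= 1) by apply Rabs_le, SIN_bound.
  set (m := PI * Rabs w / Rabs (sin phi)).
  assert (Hm : 0 < m) by (unfold m; apply Rdiv_lt_0_compat; nra).
  assert (Hdd : forall u, a - eps <= u <= b + delta ->
            m <= Rabs (dphase (frft_k2 phi) (frft_k1 phi w) u))
    by (intros u Hu; apply frft_dphase_abs_ge; lra).
  assert (HS := Tosc_nonstationary eps delta a b Heps Hdelta Ha Hab Hb _ _ k0 m Hm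
                 (frft_k2_abs_le Hw) Hdd).
  set (X := 20 / eps + 20 / delta + 10) in *.
  assert (HX : 0 <= X) by (unfold X, Rdiv; assert (0 < / eps) by (apply Rinv_0_lt_compat; lra);
    assert (0 < / delta) by (apply Rinv_0_lt_compat; lra); lra).
  set (r := sqrt (Rabs (sin phi))).
  assert (Hr : 0 < r) by now apply sqrt_lt_R0.
  assert (Hrr : r * r = Rabs (sin phi)) by (apply sqrt_sqrt; lra).
  assert (Hr1 : r <= 1) by nra.
  assert (Hratio : 0 <= (1 + Rabs w) / (PI * Rabs w) <= 1).
  { split; [apply Rdiv_le_0_compat; nra|].
    apply Rmult_le_reg_r with (PI * Rabs w); [nra|].
    unfold Rdiv. rewrite Rmult_assoc, Rinv_l by nra. nra. }
  assert (Hkey : / r * (/ m) ^ 2 * (1 + Rabs w) ^ 2 <= 1).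
  { replace (/ r * (/ m) ^ 2 * (1 + Rabs w) ^ 2) with (r ^ 3 * ((1 + Rabs w) / (PI * Rabs w)) ^ 2)
      by (unfold m; rewrite <- Hrr; field; nra).
    assert (r ^ 3 <= 1) by (rewrite <- (pow1 3); apply pow_incr; lra).
    assert (((1 + Rabs w) / (PI * Rabs w)) ^ 2 <= 1) by (rewrite <- (pow1 2); apply pow_incr; lra).
    assert (0 <= r ^ 3) by (apply pow_le; lra). nra. }
  assert (0 < / r) by now apply Rinv_0_lt_compat.
  apply Rle_trans with (/ r * (X * (/ m) ^ 2) * (1 + Rabs w) ^ 2).
  - apply Rmult_le_compat_r; [apply pow2_ge_0|]. apply Rmult_le_compat_l; lra.
  - replace (/ r * (X * (/ m) ^ 2) * (1 + Rabs w) ^ 2) with (X * (/ r * (/ m) ^ 2 * (1 + Rabs w) ^ 2))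
      by ring.
    rewrite <- (Rmult_1_r X) at 2. now apply Rmult_le_compat_l.
Qed.

Lemma one_plus_abs_sq_le_25 : Rabs w < 4 -> (1 + Rabs w) ^ 2 <= 25.
Proof. intros Hw. assert (H := Rabs_pos w). nra. Qed.

Lemma Tosc_frft_transverse : Rabs w < 4 -> Rabs (cos phi) <= 1 / 2 ->
  / sqrt (Rabs (sin phi)) * Rabs S * (1 + Rabs w) ^ 2 <= 150.
Proof.
  intros Hw Hc.
  assert (HS : Rabs S <= 3).
  { apply Ipieces_Tpiece_trivial_bound; auto using phase_continuous.
    intros u. apply Rabs_le, COS_bound. }
  assert (Hs4 : 1 / 4 <= Rabs (sin phi)).
  { assert (H := sin2_cos2 phi). rewrite (Rsqr_abs (sin phi)), (Rsqr_abs (cos phi)) in H.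
    unfold Rsqr in H. assert (H0 := Rabs_pos (cos phi)). assert (H1 := Rabs_pos (sin phi)). nra. }
  set (r := sqrt (Rabs (sin phi))).
  assert (Hr : 0 < r) by (apply sqrt_lt_R0; lra).
  assert (Hrr : r * r = Rabs (sin phi)) by (apply sqrt_sqrt; lra).
  assert (Hir : / r <= 2).
  { replace 2 with (/ (1 / 2)) by field. apply Rinv_le_contravar; nra. }
  assert (0 < / r) by now apply Rinv_0_lt_compat.
  assert (H25 := one_plus_abs_sq_le_25 Hw). assert (HS0 := Rabs_pos S).
  assert (/ r * Rabs S <= 6) by nra.
  assert (0 <= (1 + Rabs w) ^ 2) by apply pow2_ge_0.
  nra.
Qed.

Lemma phase_frft_vertex u : cos phi <> 0 ->
  phase (frft_k2 phi) (frft_k1 phi w) k0 u =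
  PI * (cos phi / sin phi) * (u - w / cos phi) ^ 2 + (k0 - PI * w ^ 2 / (sin phi * cos phi)).
Proof. intros Hc. unfold phase, frft_k2, frft_k1. field. now split. Qed.

Lemma Tosc_frft_oblique : Rabs w < 4 -> 1 / 2 < Rabs (cos phi) ->
  / sqrt (Rabs (sin phi)) * Rabs S * (1 + Rabs w) ^ 2 <= 1800.
Proof.
  intros Hw Hc.
  assert (Hc0 : cos phi <> 0) by (intros E; rewrite E, Rabs_R0 in Hc; lra).
  assert (Hal : cos phi / sin phi <> 0) by (unfold Rdiv; apply Rmult_integral_contrapositive_currified; auto using Rinv_neq_0_compat).
  assert (HS : Rabs S <= 9 * (4 / sqrt (Rabs (cos phi / sin phi)))).
  { apply Ipieces_Tpiece_primitive_bound; auto using phase_continuous.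
    intros p x. rewrite (RInt_ext _ (fun u => cos (PI * (cos phi / sin phi) * (u - w / cos phi) ^ 2
                                          + (k0 - PI * w ^ 2 / (sin phi * cos phi))))).
    - now apply RInt_cos_quadratic_bound.
    - intros u _. now rewrite phase_frft_vertex. }
  assert (Hs0 : 0 < Rabs (sin phi)) by now apply Rabs_pos_lt.
  assert (Hcs : Rabs (cos phi / sin phi) = Rabs (cos phi) / Rabs (sin phi))
    by (unfold Rdiv; now rewrite Rabs_mult, Rabs_inv).
  assert (Hcs0 : 0 < Rabs (cos phi / sin phi)) by (rewrite Hcs; apply Rdiv_lt_0_compat; lra).
  assert (Hprod : sqrt (Rabs (sin phi)) * sqrt (Rabs (cos phi / sin phi)) = sqrt (Rabs (cos phi))).
  { rewrite <- sqrt_mult_alt by lra. f_equal. rewrite Hcs. field. lra. }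
  assert (Hsc : 1 / 2 <= sqrt (Rabs (cos phi))).
  { rewrite <- (sqrt_Rsqr (1 / 2)) by lra. apply sqrt_le_1_alt. unfold Rsqr. lra. }
  set (r := sqrt (Rabs (sin phi))) in *. set (t := sqrt (Rabs (cos phi / sin phi))) in *.
  assert (Hr : 0 < r) by now apply sqrt_lt_R0.
  assert (Ht : 0 < t) by now apply sqrt_lt_R0.
  assert (Hrt : / r * / t <= 2).
  { rewrite <- Rinv_mult, Hprod. replace 2 with (/ (1 / 2)) by field. apply Rinv_le_contravar; lra. }
  assert (HS' : / r * Rabs S <= 72).
  { apply Rle_trans with (/ r * (36 * / t)).
    - apply Rmult_le_compat_l; [left; now apply Rinv_0_lt_compat | unfold Rdiv in HS; lra].
    - replace (/ r * (36 * / t)) with (36 * (/ r * / t)) by ring. lra. }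
  assert (H25 := one_plus_abs_sq_le_25 Hw).
  assert (0 <= / r * Rabs S) by (apply Rmult_le_pos; [left; now apply Rinv_0_lt_compat | apply Rabs_pos]).
  assert (0 <= (1 + Rabs w) ^ 2) by apply pow2_ge_0.
  nra.
Qed.

Lemma Tosc_frft_bound :
  / sqrt (Rabs (sin phi)) * Rabs S * (1 + Rabs w) ^ 2 <= 1000 * (/ eps + / delta).
Proof.
  assert (Hie : 1 <= / eps) by (rewrite <- Rinv_1; apply Rinv_le_contravar; lra).
  assert (Hid : 1 <= / delta) by (rewrite <- Rinv_1; apply Rinv_le_contravar; lra).
  destruct (Rle_dec 4 (Rabs w)) as [Hw|Hw].
  - eapply Rle_trans; [now apply Tosc_frft_far|]. unfold Rdiv. lra.
  - destruct (Rle_dec (Rabs (cos phi)) (1 / 2)) as [Hc|Hc].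
    + eapply Rle_trans; [apply Tosc_frft_transverse|]; lra.
    + eapply Rle_trans; [apply Tosc_frft_oblique|]; lra.
Qed.

End FrftRegimes.

Lemma Cmod_ee x : Cmod (ee x) = 1.
Proof.
  unfold Cmod, ee; simpl. rewrite !Rmult_1_r.
  rewrite <- (sqrt_1). f_equal. rewrite Rplus_comm. apply sin2_cos2.
Qed.

Lemma Cmod_le_abs_sum (x y : R) : Cmod (x, y) <= Rabs x + Rabs y.
Proof.
  unfold Cmod; simpl. assert (H1 := Rabs_pos x). assert (H2 := Rabs_pos y).
  rewrite <- (sqrt_Rsqr (Rabs x + Rabs y)) by lra.
  assert (Ex : x * x = Rabs x * Rabs x) by (rewrite <- Rabs_mult; symmetry; apply Rabs_pos_eq; nra).
  assert (Ey : y * y = Rabs y * Rabs y) by (rewrite <- Rabs_mult; symmetry; apply Rabs_pos_eq; nra).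
  apply sqrt_le_1_alt. unfold Rsqr. rewrite !Rmult_1_r, Ex, Ey. nra.
Qed.

Lemma Int_part_IZR k : Int_part (IZR k) = k.
Proof.
  destruct (base_Int_part (IZR k)) as [H1 H2]. apply le_IZR in H1.
  assert (IZR (Int_part (IZR k) - k) > -1) by (rewrite minus_IZR; lra).
  apply lt_IZR in H. lia.
Qed.

Lemma sin_neq0_off_multiples phi : phi / PI <> IZR (Int_part (phi / PI)) -> sin phi <> 0.
Proof.
  intros Hphi E. apply sin_eq_0_0 in E as [k Hk]. apply Hphi.
  assert (HPI := PI_RGT_0).
  replace (phi / PI) with (IZR k) by (rewrite Hk; field; lra).
  now rewrite Int_part_IZR.
Qed.

Lemma CInt_R_frft_kernel_Tfun eps delta a b phi w :
  0 < eps <= 1 -> 0 < delta <= 1 -> 0 <= a -> a <= b -> b <= 1 -> sin phi <> 0 ->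
  CInt_R (fun w' => Cmult (ee (((1/2) * (w ^ 2 + w' ^ 2) * cos phi - w * w') / sin phi))
                          (RtoC (Tfun eps delta a b w'))) =
  (Tosc eps delta a b (frft_k2 phi) (frft_k1 phi w) (frft_k0 phi w),
   Tosc eps delta a b (frft_k2 phi) (frft_k1 phi w) (frft_k0 phi w - PI / 2)).
Proof.
  intros Heps Hdelta Ha Hab Hb Hs.
  assert (Hth : forall k u, 2 * PI * (((1/2) * (w ^ 2 + u ^ 2) * cos phi - w * u) / sin phi) - k =
                            phase (frft_k2 phi) (frft_k1 phi w) (frft_k0 phi w - k) u).
  { intros k u. unfold phase, frft_k2, frft_k1, frft_k0. field. exact Hs. }
  unfold CInt_R, Tosc. f_equal; apply is_RInt_gen_unique.
  - eapply is_RInt_gen_ext; [|apply is_RInt_gen_Tfun; auto using phase_continuous].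
    apply filter_forall. intros _ u _. unfold ee, Cmult, RtoC; cbn [fst snd].
    rewrite <- (Rminus_0_r (frft_k0 phi w)), <- Hth, Rminus_0_r.
    match goal with |- ?l = ?r => change (@eq R l r) end. ring.
  - eapply is_RInt_gen_ext; [|apply is_RInt_gen_Tfun; auto using phase_continuous].
    apply filter_forall. intros _ u _. unfold ee, Cmult, RtoC; cbn [fst snd].
    rewrite <- Hth, cos_minus, cos_PI2, sin_PI2.
    match goal with |- ?l = ?r => change (@eq R l r) end. ring.
Qed.

Lemma frft_Tfun_at_multiples_bound eps delta a b phi w :
  0 < eps <= 1 -> 0 < delta <= 1 -> 0 <= a -> a <= b -> b <= 1 ->
  phi / PI = IZR (Int_part (phi / PI)) ->
  Cmod (frft (Tfun eps delta a b) phi w) * (1 + Rabs w) ^ 2 <= 9.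
Proof.
  intros Heps Hdelta Ha Hab Hb Hphi. unfold frft.
  destruct (Req_EM_T _ _) as [_|]; [destruct (Z.even _)|easy].
  - rewrite Cmod_R. now apply Tfun_weighted_le_9.
  - rewrite Cmod_mult, Cmod_ee, Cmod_R, Rmult_1_l, <- (Rabs_Ropp w).
    now apply Tfun_weighted_le_9.
Qed.

Lemma frft_Tfun_off_multiples_bound eps delta a b phi w :
  0 < eps <= 1 -> 0 < delta <= 1 -> 0 <= a -> a <= b -> b <= 1 ->
  phi / PI <> IZR (Int_part (phi / PI)) ->
  Cmod (frft (Tfun eps delta a b) phi w) * (1 + Rabs w) ^ 2 <= 2000 * (/ eps + / delta).
Proof.
  intros Heps Hdelta Ha Hab Hb Hphi.
  assert (Hs := sin_neq0_off_multiples phi Hphi).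
  assert (Hr : 0 < / sqrt (Rabs (sin phi))) by now apply Rinv_0_lt_compat, sqrt_lt_R0, Rabs_pos_lt.
  unfold frft. destruct (Req_EM_T _ _) as [|_]; [easy|].
  rewrite CInt_R_frft_kernel_Tfun by auto.
  rewrite !Cmod_mult, Cmod_ee, Cmod_R, Rmult_1_l, (Rabs_right (/ _)) by lra.
  eapply Rle_trans.
  { apply Rmult_le_compat_r; [apply pow2_ge_0|].
    apply Rmult_le_compat_l; [lra | apply Cmod_le_abs_sum]. }
  assert (H1 := Tosc_frft_bound eps delta a b phi w (frft_k0 phi w) Heps Hdelta Ha Hab Hb Hs).
  assert (H2 := Tosc_frft_bound eps delta a b phi w (frft_k0 phi w - PI / 2)
                  Heps Hdelta Ha Hab Hb Hs).
  lra.
Qed.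

Theorem lemma3p1 :
  exists Cst : R,
    forall eps delta a b : R,
      0 < eps <= 1 -> 0 < delta <= 1 -> 0 <= a -> a <= b -> b <= 1 ->
      forall phi w : R,
        Cmod (frft (Tfun eps delta a b) phi w) * (1 + Rabs w) ^ 2
          <= Cst * (/ eps + / delta).
Proof.
  exists 2000. intros eps delta a b Heps Hdelta Ha Hab Hb phi w.
  destruct (Req_EM_T (phi / PI) (IZR (Int_part (phi / PI)))) as [Hphi|Hphi].
  - assert (Hie : 1 <= / eps) by (rewrite <- Rinv_1; apply Rinv_le_contravar; lra).
    assert (Hid : 1 <= / delta) by (rewrite <- Rinv_1; apply Rinv_le_contravar; lra).
    assert (H := frft_Tfun_at_multiples_bound eps delta a b phi w Heps Hdelta Ha Hab Hb Hphi).
    lra.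
  - now apply frft_Tfun_off_multiples_bound.
Qed.
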